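(* For any fixed $t\in\mathbb N$, $$\|\pi_h-\pi_t\|_{\mathrm{TV}}=\mathbf E\big[\|\pi_h-\pi_t\|_{\mathrm{TV}}\big]+o_{\mathbf P}(1),$$ where $o_{\mathbf P}(1)$ denotes a term tending to $0$ in probability as $n\to\infty$ and the expectation is over the environment.
   Context: Configuration model: for each $n$, $(d_i^-)_{1\le i\le n}$, $(d_i^+)_{1\le i\le n}$ positive integers with $\sum_id_i^-=\sum_id_i^+=m$; each vertex $i\in V=\{1,\dots,n\}$ carries a set $E_i^+$ of $d_i^+$ tails and $E_i^-$ of $d_i^-$ heads; the environment $\omega$ is a uniformly random bijection from tails to heads, $\omega(e)=f$ an arc from the vertex of $e$ to that of $f$; $P(i,j)=\frac1{d_i^+}|\{e\in E_i^+:\omega(e)\in E_j^-\}|$. Standing assumption: $\min_i\min(d_i^+,d_i^-)\ge2$ and $\Delta:=\max_i\max(d_i^+,d_i^-)$ bounded uniformly in $n$. $h=\lfloor\frac{\ln n}{10\ln\Delta}\rfloor$, $\pi_0(i)=d_i^-/m$, $\pi_s=\pi_0P^s$. *)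

From HB Require Import structures.
From mathcomp Require Import all_boot all_order all_algebra.
From mathcomp Require Import all_classical all_reals all_analysis.
Set Implicit Arguments. Unset Strict Implicit. Unset Printing Implicit Defensive.
Import Order.TTheory GRing.Theory Num.Theory.
Local Open Scope ring_scope.

Section Config.
Variable R : realType.
Variable n : nat.
Variables (dm dp : 'I_n -> nat).  (* in-degrees d_i^-, out-degrees d_i^+ *)

Definition tails := {i : 'I_n & 'I_(dp i)}.
Definition heads := {i : 'I_n & 'I_(dm i)}.

(* environments: bijections tails -> heads (injective maps between sets of
   equal cardinality m); the probability is uniform on this set *)
Definition envs : {set {ffun tails -> heads}} :=
  [set w : {ffun tails -> heads} | injectiveb w].

Definition Pmat (w : {ffun tails -> heads}) : 'M[R]_n :=
  \matrix_(i, j) ((#|[set e : tails | (tag e == i) && (tag (w e) == j)]|)%:R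
                   / (dp i)%:R).

Definition mtot : nat := (\sum_(i < n) dm i)%N.

Definition pi0 : 'rV[R]_n := \row_i ((dm i)%:R / mtot%:R).

Definition pis (w : {ffun tails -> heads}) (s : nat) : 'rV[R]_n :=
  iter s (fun v => v *m Pmat w) pi0.

Definition tvdist (mu nu : 'rV[R]_n) : R :=
  \big[Num.max/0]_(A : {set 'I_n}) `|\sum_(i in A) (mu ord0 i - nu ord0 i)|.

Definition Delta : nat := (\max_(i < n) maxn (dp i) (dm i))%N.

Definition hh : nat := Num.truncn (ln (n%:R : R) / (10 * ln (Delta%:R : R))).

Definition Xtv (t : nat) (w : {ffun tails -> heads}) : R :=
  tvdist (pis w hh) (pis w t).

Definition Eenv (X : {ffun tails -> heads} -> R) : R :=
  (\sum_(w in envs) X w) / (#|envs|)%:R.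

Definition Penv (A : pred {ffun tails -> heads}) : R :=
  (#|[set w in envs | A w]|)%:R / (#|envs|)%:R.

End Config.

Definition dev_prob (R : realType) (dm dp : forall n, 'I_n -> nat)
    (t : nat) (eps : R) (n : nat) : R :=
  @Penv R n (dm n) (dp n)
    (fun w => eps < `|@Xtv R n (dm n) (dp n) t w
                       - @Eenv R n (dm n) (dp n) (@Xtv R n (dm n) (dp n) t)|).

(* Write X(w) = ||pi_h - pi_t||_TV as a function of the bijection w from tails to
   heads. Composing w with a transposition of two tails changes at most two rows of P,
   and since pi_s(j) <= Delta^(s+1)/m, the two l1-perturbed walks differ by at most
   4 s Delta^s / m after s steps; hence X changes by at most
   c = 4 (h Delta^h + t Delta^t) / m.  Revealing w one tail at a time, the conditional
   means of X move by at most c per revealed tail (a transposition maps any fibre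
   onto any other), so Var X <= m c^2 = O(Delta^(4h) / m).  As Delta^(10h) <= n this
   is O(n^(-3/5)), and Chebyshev's inequality concludes. *)

From mathcomp Require Import all_boot all_order all_algebra all_fingroup.
From mathcomp Require Import all_classical all_reals all_analysis.
From mathcomp Require Import ring lra.
Import Order.TTheory GRing.Theory Num.Theory.
Set Implicit Arguments. Unset Strict Implicit. Unset Printing Implicit Defensive.
Local Open Scope ring_scope.

Lemma sum_card_blocks (A J : finType) (p : A -> J) (S : {set A}) :
  (\sum_j #|[set w in S | p w == j]|)%N = #|S|.
Proof.
rewrite -sum1_card (partition_big p predT) //; apply: eq_bigr => j _.
by rewrite -sum1_card; apply: eq_bigl => w; rewrite !inE.
Qed.

Section SumOfSquares.
Variables (R : realFieldType) (A : finType) (f : A -> R).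
Implicit Types S : {set A}.

Definition mean S := (\sum_(w in S) f w) / #|S|%:R.
Definition sqdev S := \sum_(w in S) (f w - mean S) ^+ 2.

Lemma sum_mean S : \sum_(w in S) f w = #|S|%:R * mean S.
Proof.
have [/eqP|S_gt0] := posnP #|S|; last by rewrite mulrC divfK // pnatr_eq0 -lt0n.
by rewrite cards_eq0 => /eqP ->; rewrite big_set0 cards0 mul0r.
Qed.

Lemma sum_sq_subE S a :
  \sum_(w in S) (f w - a) ^+ 2 = sqdev S + #|S|%:R * (mean S - a) ^+ 2.
Proof.
transitivity (\sum_(w in S) ((f w - mean S) ^+ 2
    + 2 * (mean S - a) * (f w - mean S) + (mean S - a) ^+ 2)).
  by apply: eq_bigr => w _; ring.
rewrite !big_split /= -mulr_sumr sumrB sum_mean !sumr_const.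
by rewrite -[mean S *+ _]mulr_natl -[_ ^+ 2 *+ _]mulr_natl /sqdev; ring.
Qed.

Lemma sqdev_ge0 S : 0 <= sqdev S.
Proof. by apply: sumr_ge0 => w _; apply: sqr_ge0. Qed.

Lemma sqdev_const S x : {in S, forall w, f w = x} -> sqdev S = 0.
Proof.
move=> fx; apply/eqP; rewrite eq_le sqdev_ge0 andbT.
have := sum_sq_subE S x; rewrite big1 => [E|w /fx ->]; last by rewrite subrr expr0n.
by rewrite -(lerD2r (#|S|%:R * (mean S - x) ^+ 2)) -E add0r mulr_ge0 ?ler0n ?sqr_ge0.
Qed.

Lemma card_dev_le S eps : 0 < eps ->
  #|[set w in S | eps < `|f w - mean S|]|%:R * eps ^+ 2 <= sqdev S.
Proof.
move=> eps_gt0; rewrite mulrC mulr_natr -sumr_const.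
apply: le_trans (_ : \sum_(w in S) (if eps < `|f w - mean S| then eps ^+ 2 else 0) <= _).
  rewrite big_mkcond [leRHS]big_mkcond /=; apply: ler_sum => w _.
  by rewrite !inE; case: (w \in S) => //=; case: ifP.
apply: ler_sum => w _; case: ifP => [lt_eps|_]; last exact: sqr_ge0.
rewrite -[leRHS]real_normK ?num_real //.
by have := ltW lt_eps; have := ltW eps_gt0; nra.
Qed.

Section Blocks.
Variables (J : finType) (p : A -> J).
Local Notation block S j := [set w in S | p w == j].

Lemma sum_blocks S (G : A -> R) :
  \sum_(w in S) G w = \sum_j \sum_(w in block S j) G w.
Proof.
rewrite (partition_big p predT) //=.
by apply: eq_bigr => j _; apply: eq_bigl => w; rewrite !inE.
Qed.

Lemma card_blocks S : #|S|%:R = \sum_j (#|block S j|%:R : R).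
Proof. by rewrite -natr_sum sum_card_blocks. Qed.

Lemma sqdev_blocks S :
  sqdev S = \sum_j (sqdev (block S j) + #|block S j|%:R * (mean (block S j) - mean S) ^+ 2).
Proof. by rewrite {1}/sqdev (sum_blocks S); apply: eq_bigr => j _; apply: sum_sq_subE. Qed.

Lemma mean_blocks_dist S (x c : R) :
  (forall j, (0 < #|block S j|)%N -> `|x - mean (block S j)| <= c) ->
  (0 < #|S|)%N -> `|x - mean S| <= c.
Proof.
move=> blockc S_gt0.
have total : #|S|%:R * (x - mean S) = \sum_j #|block S j|%:R * (x - mean (block S j)).
  rewrite mulrBr -sum_mean (sum_blocks S) card_blocks mulr_suml -sumrB.
  by apply: eq_bigr => j _; rewrite mulrBr sum_mean.
rewrite -(@ler_pM2l _ #|S|%:R) ?ltr0n // -[X in X * _]normr_nat -normrM total.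
rewrite card_blocks mulr_suml; apply: le_trans (ler_norm_sum _ _ _) _.
apply: ler_sum => j _; rewrite normrM normr_nat.
have [->|/blockc ?] := posnP #|block S j|; first by rewrite !mul0r.
by rewrite ler_wpM2l ?ler0n.
Qed.

End Blocks.
End SumOfSquares.

Lemma mean_dist_le (R : realFieldType) (A : finType) (f g : A -> R) (S : {set A}) (c : R) :
  (0 < #|S|)%N -> {in S, forall w, `|f w - g w| <= c} -> `|mean f S - mean g S| <= c.
Proof.
move=> S_gt0 fg_le.
rewrite /mean -mulrBl -sumrB normrM normfV normr_nat ler_pdivrMr ?ltr0n //.
apply: le_trans (ler_norm_sum _ _ _) _.
by rewrite mulr_natr -sumr_const; apply: ler_sum.
Qed.

Lemma sum_reindex_bij (R : nmodType) (I : finType) (A B : {set I}) (phi psi : I -> I)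
    (G : I -> R) :
  {in A, forall a, phi a \in B} -> {in B, forall b, psi b \in A} ->
  {in A, cancel phi psi} -> {in B, cancel psi phi} ->
  \sum_(b in B) G b = \sum_(a in A) G (phi a).
Proof.
move=> phiAB psiBA phiK psiK; rewrite (reindex_onto phi psi) //.
apply: eq_bigl => a; apply/andP/idP => [[/psiBA + /eqP]|aA]; first by move=> /[swap] ->.
by rewrite phiAB ?phiK.
Qed.

Lemma mean_reindex_bij (R : realFieldType) (I : finType) (A B : {set I}) (phi psi : I -> I)
    (G : I -> R) :
  {in A, forall a, phi a \in B} -> {in B, forall b, psi b \in A} ->
  {in A, cancel phi psi} -> {in B, cancel psi phi} ->
  mean G B = mean (G \o phi) A.
Proof.
move=> phiAB psiBA phiK psiK; rewrite /mean (sum_reindex_bij G phiAB psiBA phiK psiK).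
have := sum_reindex_bij (fun=> 1%N) phiAB psiBA phiK psiK.
by rewrite !sum1_card => ->.
Qed.

Section InjectionSwaps.
Variables T H : finType.
Implicit Types (w g : {ffun T -> H}) (F : {set T}).

Definition swapf w a b : {ffun T -> H} := [ffun x => w (tperm a b x)].

Lemma swapf_inj w a b : injective w -> injective (swapf w a b).
Proof. by move=> w_inj x y; rewrite !ffunE => /w_inj /perm_inj. Qed.

Lemma swapfK w a b : swapf (swapf w a b) a b = w.
Proof. by apply/ffunP => x; rewrite !ffunE tpermK. Qed.

Definition injections := [set w : {ffun T -> H} | injectiveb w].

Definition inj_ext F g := [set w : {ffun T -> H} | injectiveb w && [forall x in F, w x == g x]].

Lemma inj_ext_inj F g (w : {ffun T -> H}) : w \in inj_ext F g -> injective w.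
Proof. by rewrite inE => /andP[/injectiveP]. Qed.

Hypothesis cardTH : #|T| = #|H|.

Definition preim1 w y e0 := odflt e0 [pick x | w x == y].

Lemma preim1K w y e0 : injective w -> w (preim1 w y e0) = y.
Proof.
move=> w_inj; rewrite /preim1; case: pickP => [x /eqP //|no_preim].
have /codomP[x yE] := inj_card_onto w_inj (eq_leq (esym cardTH)) y.
by have := no_preim x; rewrite yE eqxx.
Qed.

Definition swap_to e0 h w := swapf w e0 (preim1 w h e0).

Section Fibers.
Variables (F : {set T}) (g : {ffun T -> H}) (e0 : T).
Hypothesis e0_notin_F : e0 \notin F.

Definition fiber h := [set w in inj_ext F g | w e0 == h].

Lemma fiber_inj h (w : {ffun T -> H}) : w \in fiber h -> injective w.
Proof. by rewrite inE => /andP[/inj_ext_inj]. Qed.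

Lemma fiberE h (w1 : {ffun T -> H}) : w1 \in fiber h -> fiber h = inj_ext (e0 |: F) w1.
Proof.
rewrite !inE => /andP[/andP[_ /forallP w1g] /eqP w1e0].
apply/setP => w; rewrite !inE; case: (injectiveb w) => //=.
apply/andP/forallP => [[/forallP wg /eqP we0] x|we]; first apply/implyP.
  rewrite !inE => /orP[/eqP ->|xF]; first by rewrite we0 w1e0.
  by move: (wg x) (w1g x); rewrite xF => /eqP -> /eqP ->.
split; last by move: (we e0); rewrite !inE eqxx w1e0.
apply/forallP => x; apply/implyP => xF.
by move: (we x) (w1g x); rewrite !inE xF orbT => /eqP -> /eqP ->.
Qed.

Lemma swap_to_fiber h h' w w' :
  w \in fiber h -> w' \in fiber h' -> swap_to e0 h' w \in fiber h'.
Proof.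
move=> wh w'h'; have w_inj := fiber_inj wh; have w'_inj := fiber_inj w'h'.
move: wh w'h'; rewrite !inE => /andP[/andP[_ /forallP wg] _].
move=> /andP[/andP[_ /forallP w'g] /eqP w'e0].
set e' := preim1 w h' e0; have we' : w e' = h' := preim1K _ _ w_inj.
have /injectiveP -> : injective (swapf w e0 e') := swapf_inj w_inj.
rewrite ffunE tpermL we' eqxx andbT; apply/forallP => x; apply/implyP => xF.
have xe0 : x != e0 by apply: contraNneq e0_notin_F => <-.
have xe' : x != e'.
  apply: contra_neq xe0 => xe'; apply: w'_inj.
  by move: (wg x) (w'g x); rewrite xF => /eqP wx /eqP ->; rewrite -wx xe' we' w'e0.
have /eqP wx : w x == g x by move: (wg x); rewrite xF.
by rewrite ffunE tpermD ?wx // eq_sym.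
Qed.

Lemma swap_toK h h' w : w \in fiber h -> swap_to e0 h (swap_to e0 h' w) = w.
Proof.
move=> wh; have w_inj := fiber_inj wh; rewrite /swap_to.
set e' := preim1 w h' e0; set u := swapf w e0 e'.
have u_inj : injective u := swapf_inj w_inj.
have ue' : u e' = h.
  by rewrite ffunE tpermR; move: wh; rewrite inE => /andP[_ /eqP ->].
have -> : preim1 u h e0 = e' by apply: (u_inj); rewrite ue' preim1K.
by rewrite /u swapfK.
Qed.

End Fibers.

Section BoundedSwaps.
Variables (R : realFieldType) (f : {ffun T -> H} -> R) (c : R).
Hypothesis f_swap_le : forall w a b, injective w -> `|f w - f (swapf w a b)| <= c.

Lemma mean_fiber_dist F g e0 h h' w w' : e0 \notin F ->
  w \in fiber F g e0 h -> w' \in fiber F g e0 h' ->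
  `|mean f (fiber F g e0 h) - mean f (fiber F g e0 h')| <= c.
Proof.
move=> e0F wh w'h'.
have to_h' : {in fiber F g e0 h, forall u, swap_to e0 h' u \in fiber F g e0 h'}.
  by move=> u uh; exact: (swap_to_fiber e0F uh w'h').
have to_h : {in fiber F g e0 h', forall u, swap_to e0 h u \in fiber F g e0 h}.
  by move=> u uh'; exact: (swap_to_fiber e0F uh' wh).
have to_h'K : {in fiber F g e0 h, cancel (swap_to e0 h') (swap_to e0 h)}.
  by move=> u; apply: swap_toK.
have to_hK : {in fiber F g e0 h', cancel (swap_to e0 h) (swap_to e0 h')}.
  by move=> u; apply: swap_toK.
rewrite (mean_reindex_bij f to_h' to_h to_h'K to_hK).
apply: mean_dist_le => [|u uh]; first by apply/card_gt0P; exists w.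
exact/f_swap_le/(fiber_inj uh).
Qed.

(* The law of total variance for the fibres of [w |-> w e0], an induction on the
   number of unrevealed tails, and [mean_fiber_dist] for the between-fibre part. *)
Lemma sqdev_inj_ext_le k F g : #|~: F| = k ->
  sqdev f (inj_ext F g) <= #|inj_ext F g|%:R * k%:R * c ^+ 2.
Proof.
elim: k F g => [|k IHk] F g.
  move=> /cards0_eq FT; rewrite (@sqdev_const _ _ _ _ (f g)) ?mulr0 ?mul0r // => w.
  rewrite inE => /andP[_ /forallP wg]; congr f; apply/ffunP => x.
  have : x \notin ~: F by rewrite FT inE.
  rewrite inE negbK => xF.
  by move: (wg x); rewrite xF => /eqP.
move=> cardCF; have [e0] : exists e0, e0 \in ~: F by apply/card_gt0P; rewrite cardCF.
rewrite inE => e0F.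
have cardCeF : #|~: (e0 |: F)| = k.
  have -> : ~: (e0 |: F) = ~: F :\ e0 by apply/setP => x; rewrite !inE negb_or.
  by move: cardCF; rewrite (cardsD1 e0) inE e0F => -[].
rewrite (sqdev_blocks f (fun u : {ffun T -> H} => u e0)).
rewrite (card_blocks _ (fun u : {ffun T -> H} => u e0)).
rewrite !mulr_suml; apply: ler_sum => h _; rewrite -/(fiber F g e0 h).
have [/cards0_eq ->|/card_gt0P[w wh]] := posnP #|fiber F g e0 h|.
  by rewrite /sqdev big_set0 cards0 !mul0r addr0.
have IH := IHk (e0 |: F) w cardCeF; rewrite -(fiberE wh) in IH.
have dist : `|mean f (fiber F g e0 h) - mean f (inj_ext F g)| <= c.
  apply: (mean_blocks_dist (p := fun u : {ffun T -> H} => u e0)) => [h' /card_gt0P[w' w'h']|].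
    exact: mean_fiber_dist e0F wh w'h'.
  by apply/card_gt0P; exists w; move: wh; rewrite inE => /andP[].
rewrite -natr1 mulrDr mulr1 mulrDl; apply: lerD => //.
rewrite ler_wpM2l //; move: dist; rewrite ler_norml => /andP[]; nra.
Qed.

Lemma card_dev_injections_le (eps : R) : 0 < eps ->
  #|[set w in injections | eps < `|f w - mean f injections|]|%:R / #|injections|%:R
    <= #|T|%:R * c ^+ 2 / eps ^+ 2.
Proof.
set S := injections; move=> eps_gt0; have rhs_ge0 : 0 <= #|T|%:R * c ^+ 2 / eps ^+ 2.
  by rewrite divr_ge0 ?sqr_ge0 // mulr_ge0 ?sqr_ge0.
have [S0|/card_gt0P[w0 w0S]] := posnP #|S|; first by rewrite S0 invr0 mulr0.
have S_inj_ext : S = inj_ext finset.set0 w0.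
  by apply/setP => w; rewrite !inE; case: injectiveb => //=; apply/esym/forallP => x; rewrite inE.
have cardC0 : #|~: (finset.set0 : {set T})| = #|T|.
  by rewrite -cardsT; apply: eq_card => x; rewrite !inE.
have sqdevS := sqdev_inj_ext_le w0 cardC0; rewrite -S_inj_ext in sqdevS.
have S_gt0 : 0 < #|S|%:R :> R by rewrite ltr0n; apply/card_gt0P; exists w0.
rewrite ler_pdivrMr // mulrAC ler_pdivlMr ?exprn_gt0 //.
rewrite [leRHS](_ : _ = #|S|%:R * #|T|%:R * c ^+ 2); last by ring.
exact: le_trans (card_dev_le f S eps_gt0) sqdevS.
Qed.

End BoundedSwaps.
End InjectionSwaps.

Lemma card_tag (I : finType) (T_ : I -> finType) i :
  #|[set e : {i : I & T_ i} | tag e == i]| = #|T_ i|.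
Proof.
have -> : [set e : {i : I & T_ i} | tag e == i] = Tagged T_ @: [set: T_ i].
  apply/setP => e; rewrite inE; apply/eqP/imsetP; last by case=> x _ ->.
  by move=> E; exists (etagged E); rewrite ?inE ?etaggedK.
by rewrite card_imset ?cardsT // => x y; apply: eq_from_Tagged.
Qed.

Lemma card_tags (k : nat) (d : 'I_k -> nat) : #|{: {i : 'I_k & 'I_(d i)}}| = (\sum_i d i)%N.
Proof.
by rewrite card_tagged sumnE big_map big_enum; apply: eq_bigr => i _; rewrite card_ord.
Qed.

Lemma sum_indicator1 (R : nzSemiRingType) (I : finType) (x : I) : \sum_i ((i == x)%:R : R) = 1.
Proof. by rewrite (bigD1 x) //= eqxx big1 ?addr0 // => i /negbTE ->. Qed.

Section Chain.
Variables (R : realType) (n : nat) (dm dp : 'I_n -> nat).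
Hypothesis dp_gt0 : forall i, (0 < dp i)%N.
Local Notation T := (tails dp).
Local Notation P w := (Pmat R w).
Implicit Types (w : {ffun T -> heads dm}) (u v : 'rV[R]_n).

Definition narcs w i j := #|[set e : T | (tag e == i) && (tag (w e) == j)]|.

Lemma PmatE w i j : P w i j = (narcs w i j)%:R / (dp i)%:R.
Proof. by rewrite mxE. Qed.

Lemma Pmat_ge0 w i j : 0 <= P w i j.
Proof. by rewrite PmatE divr_ge0 ?ler0n. Qed.

Lemma sum_narcs_row w i : (\sum_j narcs w i j)%N = dp i.
Proof.
rewrite -[RHS]card_ord -(card_tag (fun i => 'I_(dp i)) i) -(sum_card_blocks (fun e => tag (w e))).
by apply: eq_bigr => j _; apply: eq_card => e; rewrite !inE.
Qed.

Lemma Pmat_row_sum w i : \sum_j P w i j = 1.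
Proof.
under eq_bigr do rewrite PmatE.
by rewrite -mulr_suml -natr_sum sum_narcs_row divff // pnatr_eq0 -lt0n.
Qed.

Lemma sum_narcs_col_le w j : injective w -> (\sum_i narcs w i j <= dm j)%N.
Proof.
move=> w_inj; have -> : (\sum_i narcs w i j = #|[set e : T | tag (w e) == j]|)%N.
  rewrite -(sum_card_blocks tag); apply: eq_bigr => i _.
  by apply: eq_card => e; rewrite !inE andbC.
rewrite -[dm j]card_ord -(card_tag (fun i => 'I_(dm i)) j) -(card_imset _ w_inj).
apply/subset_leq_card/fintype.subsetP => y /imsetP[e].
by rewrite !inE => + ->.
Qed.

Lemma Pmat_col_sum_le w j : injective w -> \sum_i P w i j <= (dm j)%:R.
Proof.
move=> w_inj; apply: le_trans (_ : \sum_i (narcs w i j)%:R <= _).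
  apply: ler_sum => i _; rewrite PmatE ler_pdivrMr ?ltr0n //.
  by rewrite ler_peMr ?ler0n // ler1n.
by rewrite -natr_sum ler_nat sum_narcs_col_le.
Qed.

Definition l1norm v := \sum_j `|v ord0 j|.

Lemma l1norm_ge0 v : 0 <= l1norm v.
Proof. by apply: sumr_ge0 => j _. Qed.

Lemma l1normN v : l1norm (- v) = l1norm v.
Proof. by apply: eq_bigr => j _; rewrite mxE normrN. Qed.

Lemma l1normD u v : l1norm (u + v) <= l1norm u + l1norm v.
Proof. by rewrite /l1norm -big_split; apply: ler_sum => j _; rewrite mxE ler_normD. Qed.

Lemma l1norm_mulmx_le u (M : 'M[R]_n) :
  l1norm (u *m M) <= \sum_i `|u ord0 i| * \sum_j `|M i j|.
Proof.
rewrite /l1norm; under eq_bigr do rewrite mxE.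
apply: le_trans (_ : \sum_j \sum_i `|u ord0 i| * `|M i j| <= _).
  apply: ler_sum => j _; apply: le_trans (ler_norm_sum _ _ _) _.
  by apply: ler_sum => i _; rewrite normrM.
by rewrite exchange_big /=; under eq_bigr do rewrite -mulr_sumr.
Qed.

Lemma l1norm_mulmx_Pmat_le u w : l1norm (u *m P w) <= l1norm u.
Proof.
apply: le_trans (l1norm_mulmx_le _ _) _; apply: ler_sum => i _.
under eq_bigr do rewrite ger0_norm ?Pmat_ge0 //.
by rewrite Pmat_row_sum mulr1.
Qed.

Lemma narcs_swapf w a b i j : i != tag a -> i != tag b ->
  narcs (swapf w a b) i j = narcs w i j.
Proof.
move=> ia ib; apply: eq_card => e; rewrite !inE ffunE.
case: eqP => //= ei; rewrite tpermD //.
  by apply: contra_neq ia => ->; rewrite ei.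
by apply: contra_neq ib => ->; rewrite ei.
Qed.

Lemma Pmat_swapf_row_dist w a b i :
  \sum_j `|P w i j - P (swapf w a b) i j| <= 2 * ((i == tag a)%:R + (i == tag b)%:R).
Proof.
have row_le2 : \sum_j `|P w i j - P (swapf w a b) i j| <= 2.
  apply: le_trans (_ : \sum_j (P w i j + P (swapf w a b) i j) <= _).
    apply: ler_sum => j _; apply: le_trans (ler_normB _ _) _.
    by rewrite !ger0_norm ?Pmat_ge0.
  by rewrite big_split /= !Pmat_row_sum.
have [ia|ia] := eqVneq i (tag a).
  by apply: le_trans row_le2 _; rewrite ler_peMr // lerDl ler0n.
have [ib|ib] := eqVneq i (tag b).
  by apply: le_trans row_le2 _; rewrite ler_peMr // lerDr ler0n.
by rewrite big1 ?mulr0 // => j _; rewrite !PmatE narcs_swapf // subrr normr0.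
Qed.

Lemma l1norm_mulmx_Pmat_swapf_le u w a b (c : R) : (forall i, `|u ord0 i| <= c) ->
  l1norm (u *m (P w - P (swapf w a b))) <= 4 * c.
Proof.
move=> u_le; apply: le_trans (l1norm_mulmx_le _ _) _.
apply: le_trans (_ : \sum_i c * (2 * ((i == tag a)%:R + (i == tag b)%:R)) <= _).
  apply: ler_sum => i _; apply: ler_pM; rewrite ?sumr_ge0 //.
  apply: le_trans (Pmat_swapf_row_dist w a b i).
  by apply: ler_sum => j _; rewrite !mxE.
rewrite -mulr_sumr -mulr_sumr big_split /= !sum_indicator1.
by have := le_trans (normr_ge0 _) (u_le (tag a)); lra.
Qed.

Lemma norm_sum_in_le_l1norm v (A : {set 'I_n}) : `|\sum_(i in A) v ord0 i| <= l1norm v.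
Proof.
apply: le_trans (ler_norm_sum _ _ _) _.
by rewrite [leRHS](bigID (mem A)) /= lerDl sumr_ge0.
Qed.

Lemma tvdist_ge0 u v : 0 <= tvdist u v.
Proof. exact: bigmax_ge_id. Qed.

Lemma tvdist_le u v u' v' : tvdist u v <= tvdist u' v' + (l1norm (u - u') + l1norm (v - v')).
Proof.
apply: bigmax_le => [|A _]; first by rewrite addr_ge0 ?tvdist_ge0 ?addr_ge0 ?l1norm_ge0.
have -> : \sum_(i in A) (u ord0 i - v ord0 i) = \sum_(i in A) (u' ord0 i - v' ord0 i)
    + (\sum_(i in A) (u - u') ord0 i - \sum_(i in A) (v - v') ord0 i).
  by rewrite -sumrB -big_split /=; apply: eq_bigr => i _; rewrite !mxE; ring.
apply: le_trans (ler_normD _ _) _; apply: lerD.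
  exact: (le_bigmax 0 (fun B : {set 'I_n} => `|\sum_(i in B) (u' ord0 i - v' ord0 i)|) A).
by apply: le_trans (ler_normB _ _) _; apply: lerD; apply: norm_sum_in_le_l1norm.
Qed.

Lemma tvdist_lipschitz u v u' v' :
  `|tvdist u v - tvdist u' v'| <= l1norm (u - u') + l1norm (v - v').
Proof.
rewrite ler_norml lerBlDl tvdist_le andbT.
have := tvdist_le u' v' u v; rewrite -[u' - u]opprB -[v' - v]opprB !l1normN; lra.
Qed.

Lemma dm_le_Delta j : (dm j <= Delta dm dp)%N.
Proof.
exact: leq_trans (leq_maxr (dp j) _) (leq_bigmax (F := fun i => maxn (dp i) (dm i)) j).
Qed.

Local Notation D := ((Delta dm dp)%:R : R).
Local Notation m := ((mtot dm)%:R : R).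

Lemma pis_bounds w s j : injective w -> 0 <= pis R w s ord0 j <= D ^+ s.+1 / m.
Proof.
move=> w_inj; elim: s j => [|s IHs] j.
  rewrite mxE expr1 divr_ge0 ?ler0n //=.
  by rewrite ler_wpM2r ?invr_ge0 ?ler0n // ler_nat dm_le_Delta.
rewrite /= mxE; apply/andP; split.
  by apply: sumr_ge0 => i _; rewrite mulr_ge0 ?Pmat_ge0 //; case/andP: (IHs i).
apply: le_trans (_ : \sum_i D ^+ s.+1 / m * P w i j <= _).
  by apply: ler_sum => i _; rewrite ler_wpM2r ?Pmat_ge0 //; case/andP: (IHs i).
rewrite -mulr_sumr [in leRHS]exprSr [leRHS]mulrAC ler_wpM2l ?divr_ge0 ?exprn_ge0 ?ler0n //.
by apply: le_trans (Pmat_col_sum_le j w_inj) _; rewrite ler_nat dm_le_Delta.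
Qed.

Lemma l1norm_pis_swapf_le w a b s : injective w -> (0 < Delta dm dp)%N ->
  l1norm (pis R w s - pis R (swapf w a b) s) <= 4 * s%:R * D ^+ s / m.
Proof.
move=> w_inj D_gt0; have w'_inj : injective (swapf w a b) := swapf_inj w_inj.
elim: s => [|s IHs].
  by rewrite /l1norm big1 ?mulr0 ?mul0r // => j _; rewrite !mxE subrr normr0.
set w' := swapf w a b.
have -> : pis R w s.+1 - pis R w' s.+1 =
    (pis R w s - pis R w' s) *m P w + pis R w' s *m (P w - P w').
  by rewrite /= mulmxBl mulmxBr addrA subrK.
apply: le_trans (l1normD _ _) _.
have old_diff := le_trans (l1norm_mulmx_Pmat_le (pis R w s - pis R w' s) w) IHs.
have new_diff : l1norm (pis R w' s *m (P w - P w')) <= 4 * (D ^+ s.+1 / m).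
  apply: l1norm_mulmx_Pmat_swapf_le => i.
  by have /andP[pis_ge0 pis_le] := pis_bounds s i w'_inj; rewrite ger0_norm.
apply: le_trans (lerD old_diff new_diff) _.
have Ds : D ^+ s <= D ^+ s.+1 by rewrite exprS ler_peMl ?exprn_ge0 ?ler0n // ler1n.
rewrite [leRHS](_ : _ = 4 * s%:R * D ^+ s.+1 / m + 4 * (D ^+ s.+1 / m)); last first.
  by rewrite -natr1; ring.
by rewrite lerD2r ler_wpM2r ?invr_ge0 ?ler0n // ler_wpM2l ?mulr_ge0 ?ler0n.
Qed.

Lemma Xtv_swapf_le t w a b : injective w -> (0 < Delta dm dp)%N ->
  `|Xtv R t w - Xtv R t (swapf w a b)| <=
    4 * (hh R dm dp)%:R * D ^+ hh R dm dp / m + 4 * t%:R * D ^+ t / m.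
Proof.
by move=> w_inj D_gt0; apply: le_trans (tvdist_lipschitz _ _ _ _) (lerD _ _);
  apply: l1norm_pis_swapf_le.
Qed.

End Chain.

Section FixedSize.
Variables (R : realType) (n : nat) (dm dp : 'I_n -> nat).
Hypothesis n_gt0 : (0 < n)%N.
Hypothesis degrees_ge2 : forall i, (2 <= dm i)%N /\ (2 <= dp i)%N.
Hypothesis sum_degrees : (\sum_i dm i)%N = (\sum_i dp i)%N.

Lemma Delta_ge2 : (2 <= Delta dm dp)%N.
Proof.
have i0 : 'I_n := Ordinal n_gt0; case: (degrees_ge2 i0) => _ /leq_trans; apply.
exact: leq_trans (leq_maxl _ _) (leq_bigmax (F := fun i => maxn (dp i) (dm i)) i0).
Qed.

Lemma n_le_mtot : (n <= mtot dm)%N.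
Proof.
rewrite -[n in (n <= _)%N]card_ord -sum1_card; apply: leq_sum => i _.
by case: (degrees_ge2 i) => /ltnW.
Qed.

Lemma Delta_exp_hh_le : (Delta dm dp ^ (10 * hh R dm dp) <= n)%N.
Proof.
set D := Delta dm dp; have D_gt1 : (1 < D)%N := Delta_ge2.
set x : R := ln n%:R / (10 * ln D%:R).
have lnD_gt0 : 0 < ln (D%:R : R) by rewrite ln_gt0 // ltr1n.
have lnn_ge0 : 0 <= ln (n%:R : R) by rewrite ln_ge0 // ler1n.
have x_ge0 : 0 <= x by rewrite divr_ge0 // mulr_ge0 // ltW.
have := truncn_le x; rewrite x_ge0 /x ler_pdivlMr ?mulr_gt0 // => hh_le.
rewrite -(ler_nat R) natrX -ler_ln ?posrE ?exprn_gt0 ?ltr0n ?(ltn_trans _ D_gt1) //.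
rewrite lnXn ?ltr0n ?(ltn_trans _ D_gt1) // mulrnA -[_ *+ hh R dm dp]mulr_natr.
rewrite -[_ *+ 10]mulr_natr; lra.
Qed.

Lemma deviation_prob_le t (eps : R) : 0 < eps ->
  @Penv R n dm dp (fun w => eps < `|Xtv R t w - Eenv (@Xtv R n dm dp t)|) <=
  16 / eps ^+ 2 * ((hh R dm dp * Delta dm dp ^ hh R dm dp + t * Delta dm dp ^ t)%N%:R ^+ 2
                   / (mtot dm)%:R).
Proof.
move=> eps_gt0.
have dp_gt0 i : (0 < dp i)%N by case: (degrees_ge2 i) => _; apply: leq_trans.
have card_tails : #|{: tails dp}| = mtot dm by rewrite card_tags /mtot sum_degrees.
have cardTH : #|{: tails dp}| = #|{: heads dm}| by rewrite !card_tags sum_degrees.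
have D_gt0 : (0 < Delta dm dp)%N by apply: leq_trans Delta_ge2.
have := card_dev_injections_le cardTH
  (fun w a b w_inj => Xtv_swapf_le R dp_gt0 t a b w_inj D_gt0) eps_gt0.
move/le_trans; apply; rewrite card_tails.
set u := (_ + _)%N; have -> : 4 * (hh R dm dp)%:R * (Delta dm dp)%:R ^+ hh R dm dp / (mtot dm)%:R
    + 4 * t%:R * (Delta dm dp)%:R ^+ t / (mtot dm)%:R = 4 * u%:R / (mtot dm)%:R :> R.
  by rewrite -mulrDl -!mulrA -mulrDr /u natrD !natrM !natrX mulrA.
have : (mtot dm)%:R != 0 :> R by rewrite pnatr_eq0 -lt0n (leq_trans n_gt0 n_le_mtot).
move: (mtot dm)%:R u%:R => M U M_neq0; rewrite le_eqVlt; apply/orP; left; apply/eqP.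
by field; rewrite M_neq0 gt_eqF.
Qed.

Lemma hh_sum_le t D0 : (forall i, (dm i <= D0)%N /\ (dp i <= D0)%N) ->
  (hh R dm dp * Delta dm dp ^ hh R dm dp + t * Delta dm dp ^ t
     <= (1 + t * D0 ^ t) * (Delta dm dp ^ hh R dm dp) ^ 2)%N.
Proof.
move=> degrees_le; set h := hh R dm dp; set a := (Delta dm dp ^ h)%N.
have a_gt0 : (0 < a)%N by rewrite expn_gt0 (leq_trans _ Delta_ge2).
have Delta_le : (Delta dm dp <= D0)%N.
  by apply/bigmax_leqP => i _; case: (degrees_le i) => ? ?; rewrite geq_max; apply/andP.
rewrite mulnDl mul1n; apply: leq_add.
  by rewrite leq_mul2r ltnW ?orbT // ltn_expl // Delta_ge2.
have pow_le : (Delta dm dp ^ t <= D0 ^ t)%N by elim: (t) => // k IHk; rewrite !expnS leq_mul.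
apply: (@leq_trans (t * D0 ^ t)); first by rewrite leq_mul2l pow_le orbT.
by rewrite leq_pmulr // expn_gt0 a_gt0.
Qed.

Lemma deviation_prob_le_ratio t (eps : R) D0 :
  (forall i, (dm i <= D0)%N /\ (dp i <= D0)%N) -> 0 < eps ->
  @Penv R n dm dp (fun w => eps < `|Xtv R t w - Eenv (@Xtv R n dm dp t)|) <=
  16 * (1 + t * D0 ^ t)%N%:R ^+ 2 / eps ^+ 2
     * (((Delta dm dp ^ hh R dm dp) ^ 4)%N%:R / n%:R).
Proof.
move=> degrees_le eps_gt0; apply: le_trans (deviation_prob_le t eps_gt0) _.
set x := (_ + _)%N; set K := (1 + _)%N; set a := (Delta dm dp ^ hh R dm dp)%N.
rewrite [leRHS](_ : _ = 16 / eps ^+ 2 * ((K * a ^ 2)%N%:R ^+ 2 / n%:R)); last first.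
  by rewrite natrM !(natrX _ a); field; rewrite pnatr_eq0 -lt0n n_gt0 gt_eqF.
have x_le : x%:R ^+ 2 <= (K * a ^ 2)%N%:R ^+ 2 :> R.
  by apply: lerXn2r; rewrite ?nnegrE ?ler0n // ler_nat hh_sum_le.
have inv_le : (mtot dm)%:R^-1 <= n%:R^-1 :> R.
  by rewrite lef_pV2 ?posrE ?ltr0n ?ler_nat ?n_le_mtot // (leq_trans n_gt0 n_le_mtot).
apply: ler_wpM2l; first by apply: divr_ge0; last exact: sqr_ge0.
by apply: ler_pM x_le inv_le; [exact: sqr_ge0 | rewrite invr_ge0].
Qed.

End FixedSize.

Local Open Scope classical_set_scope.
Local Open Scope ring_scope.

Lemma ratio_sqr_le (R : realFieldType) (a n : nat) : (0 < n)%N -> (a ^ 10 <= n)%N ->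
  ((a ^ 4)%:R / n%:R) ^+ 2 <= n%:R^-1 :> R.
Proof.
move=> n_gt0 an; have n_neq0 : n%:R != 0 :> R by rewrite pnatr_eq0 -lt0n.
rewrite expr_div_n -natrX -expnM ler_pdivrMr ?exprn_gt0 ?ltr0n //.
rewrite expr2 mulrA mulVf // mul1r ler_nat; apply: leq_trans an.
by case: a => // a; rewrite leq_pexp2l.
Qed.

Lemma Delta_hh_ratio_cvg0 (R : realType) (dm dp : forall n : nat, 'I_n -> nat) :
  (forall n (i : 'I_n), (2 <= dm n i)%N /\ (2 <= dp n i)%N) ->
  (fun n => ((Delta (dm n) (dp n) ^ hh R (dm n) (dp n)) ^ 4)%N%:R / n%:R : R) @ \oo --> 0.
Proof.
move=> degrees_ge2; apply/cvgr0Pnorm_le => e e_gt0; near=> n.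
have n_gt0 : (0 < n)%N by near: n; exact: nbhs_infty_ge.
have n_ge : e ^- 2 <= n%:R by near: n; exact: nbhs_infty_ger.
set x := (_ / _); have x_ge0 : 0 <= x by rewrite divr_ge0 ?ler0n.
rewrite ger0_norm // -(@ler_pXn2r _ 2 erefl x e) ?nnegrE ?(ltW e_gt0) //.
apply: le_trans (ratio_sqr_le _ n_gt0 _) _.
  by rewrite -expnM mulnC (Delta_exp_hh_le R n_gt0 (degrees_ge2 n)).
by rewrite -[leRHS]invrK lef_pV2 ?posrE ?invr_gt0 ?exprn_gt0 ?ltr0n.
Unshelve. all: end_near. Qed.

Theorem lemma5 (R : realType) (dm dp : forall n : nat, 'I_n -> nat)
  (Hsum : forall n, (\sum_(i < n) dm n i)%N = (\sum_(i < n) dp n i)%N)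
  (Hmin : forall n (i : 'I_n), (2 <= dm n i)%N /\ (2 <= dp n i)%N)
  (Hbnd : exists D : nat, forall n (i : 'I_n), (dm n i <= D)%N /\ (dp n i <= D)%N)
  (t : nat) :
  forall eps : R, 0 < eps -> dev_prob dm dp t eps @ \oo --> 0.
Proof.
move=> eps eps_gt0; have [D0 degrees_le] := Hbnd.
set C : R := 16 * (1 + t * D0 ^ t)%N%:R ^+ 2 / eps ^+ 2.
have bound_cvg0 :
    C * (((Delta (dm n) (dp n) ^ hh R (dm n) (dp n)) ^ 4)%N%:R / n%:R) @[n --> \oo] --> 0.
  by rewrite -(mulr0 C); apply: cvgMl_tmp; apply: Delta_hh_ratio_cvg0.
apply/cvgr0Pnorm_le => e e_gt0; near=> n.
have n_gt0 : (0 < n)%N by near: n; exact: nbhs_infty_ge.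
rewrite ger0_norm ?divr_ge0 ?ler0n //.
apply: le_trans (deviation_prob_le_ratio n_gt0 (Hmin n) (Hsum n) t (degrees_le n) eps_gt0) _.
apply: le_trans (ler_norm _) _; near: n; exact: cvgr0_norm_le bound_cvg0 _ e_gt0.
Unshelve. all: end_near. Qed.
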